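(* Let $X$ be a continuum that is $d(X)$-Baire. Then the union of any nest (family totally ordered by inclusion) of closed nowhere dense subsets of $X$ is not equal to $X$.
   Context: A continuum is a nondegenerate compact connected Hausdorff space. $d(X)$ is the least cardinality of a dense subset of $X$; $X$ is $\alpha$-Baire if every family of $\alpha$ many open dense subsets of $X$ has dense intersection. *)

From HB Require Import structures.
From mathcomp Require Import all_boot all_order all_algebra.
From mathcomp Require Import all_classical all_reals all_analysis.
Set Implicit Arguments. Unset Strict Implicit. Unset Printing Implicit Defensive.
Local Open Scope classical_set_scope.

Definition continuum (X : topologicalType) : Prop :=
  [/\ hausdorff_space X, compact [set: X], connected [set: X] &
      exists x y : X, x <> y].

(* D realizes the density d(X): D is dense and has least cardinality
   among dense subsets of X. *)
Definition density_set (X : topologicalType) (D : set X) : Prop :=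
  dense D /\ forall D' : set X, dense D' -> (D #<= D')%card.

(* X is kappa-Baire where kappa = |K|: every family of open dense sets
   indexed by the elements of K has dense intersection. *)
Definition card_Baire (X : topologicalType) (T : Type) (K : set T) : Prop :=
  forall F : T -> set X, (forall k, K k -> open (F k) /\ dense (F k)) ->
    dense (\bigcap_(k in K) F k).

Definition dX_Baire (X : topologicalType) : Prop :=
  exists D : set X, density_set D /\ card_Baire X D.

Definition nest (X : Type) (N : set (set X)) : Prop :=
  forall A B, N A -> N B -> A `<=` B \/ B `<=` A.

Definition nowhere_dense (X : topologicalType) (A : set X) : Prop :=
  (closure A)^° = set0.

From HB Require Import structures.
From mathcomp Require Import all_boot all_order all_algebra.
From mathcomp Require Import all_classical all_reals all_analysis.
Set Implicit Arguments. Unset Strict Implicit. Unset Printing Implicit Defensive.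
Local Open Scope classical_set_scope.

(* Suppose a nest N of closed nowhere dense sets covers X and pick, for each
   point d of a dense set D of size d(X), a member F d of N containing d.  By
   the d(X)-Baire property the complements of the F d have a common point z,
   lying in some A of N.  As N is a nest and z avoids every F d, each F d lies
   inside A, so the closed set A contains D and hence all of X, which a
   nowhere dense subset of a nonempty space cannot do. *)

Lemma nowhere_dense_denseC (X : topologicalType) (A : set X) :
  nowhere_dense A -> dense (~` A).
Proof.
move=> ndA O [x Ox] oO; apply/set0P/negP => /eqP OnA.
have OA : O `<=` closure A.
  move=> y Oy; apply: subset_closure; apply: contrapT => nAy.
  by have : (O `&` ~` A) y by []; rewrite OnA.
by move: OA; rewrite open_subsetE // ndA => /(_ x Ox).
Qed.

Lemma dense_setT0 (X : topologicalType) (D : set X) :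
  [set: X] !=set0 -> dense D -> D !=set0.
Proof. by move=> X0 /(_ _ X0 openT); rewrite setTI. Qed.

Lemma nowhere_dense_closed_nsupset_dense (X : topologicalType) (A D : set X) :
  [set: X] !=set0 -> closed A -> nowhere_dense A -> dense D -> ~ D `<=` A.
Proof.
move=> X0 cA ndA dD DA.
have [x nAx] := dense_setT0 X0 (nowhere_dense_denseC ndA).
have [y [nAy Dy]] := dD _ (ex_intro _ x nAx) (closed_openC cA).
exact: nAy (DA y Dy).
Qed.

Lemma nest_bigcapC_sub (X I : Type) (N : set (set X)) (K : set I)
    (F : I -> set X) (A : set X) (z : X) :
  nest N -> N A -> A z -> (forall i, K i -> N (F i)) ->
  (\bigcap_(i in K) ~` F i) z -> forall i, K i -> F i `<=` A.
Proof.
move=> nN NA Az NF zF i Ki.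
by case: (nN _ _ NA (NF i Ki)) => // AF; have := zF i Ki (AF z Az).
Qed.

Lemma bigcup_setT_choice (X : Type) (N : set (set X)) :
  \bigcup_(A in N) A = [set: X] ->
  exists2 F : X -> set X, forall x, N (F x) & forall x, F x x.
Proof.
move=> NX; suff /choice [F NF] : forall x, exists A, N A /\ A x.
  by exists F => x; have [] := NF x.
move=> x; have [A NA Ax] : (\bigcup_(A in N) A) x by rewrite NX.
by exists A.
Qed.

Theorem mainTheorem5 (X : topologicalType) (N : set (set X)) :
  continuum X -> dX_Baire X -> nest N ->
  (forall A, N A -> closed A /\ nowhere_dense A) ->
  \bigcup_(A in N) A <> [set: X].
Proof.
move=> [_ _ _ [x0 _]] [D [[dD _] BD]] nN cndN NX.
have X0 : [set: X] !=set0 by exists x0.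
have [F NF Fself] := bigcup_setT_choice NX.
have dFC : dense (\bigcap_(d in D) ~` F d).
  apply: BD => d _; have [cF ndF] := cndN _ (NF d).
  by split; [exact: closed_openC | exact: nowhere_dense_denseC].
have [z Fz] := dense_setT0 X0 dFC.
have [A NA Az] : (\bigcup_(A in N) A) z by rewrite NX.
have [cA ndA] := cndN _ NA.
have FA := nest_bigcapC_sub nN NA Az (fun d _ => NF d) Fz.
apply: (nowhere_dense_closed_nsupset_dense X0 cA ndA dD) => d Dd.
exact: FA _ Dd _ (Fself d).
Qed.
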